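(* Let $L$ be a sharp C-lattice and $p\in L$ a prime element. Then the localization $L_p$ is sharp.
   Context: A multiplicative lattice is a complete lattice $(L,\le)$ with bottom $0$ and top $1$ which is also a commutative monoid with identity $1$ such that $a(\bigvee_\alpha b_\alpha)=\bigvee_\alpha(ab_\alpha)$ for all $a,b_\alpha\in L$. An element $c$ is compact if $c\le\bigvee S$ implies $c\le\bigvee T$ for some finite $T\subseteq S$. A C-lattice is a multiplicative lattice in which $1$ is compact, the product of two compact elements is compact, and every element is a join of compact elements; let $L^*$ denote its set of compact elements. A proper element $p\neq1$ is prime if $xy\le p$ implies $x\le p$ or $y\le p$. For $p$ prime and $x\in L$, $x_p=\bigvee\{a\in L^*: as\le x \text{ for some } s\in L^* \text{ with } s\not\le p\}$, and $L_p=\{x_p: x\in L\}$ is a lattice with multiplication $(x,y)\mapsto(xy)_p$, join $\{b_\alpha\}\mapsto(\bigvee b_\alpha)_p$ and meet $\{b_\alpha\}\mapsto(\bigwedge b_\alpha)_p$. A lattice $M$ is sharp if whenever $a_1a_2\le b$ in $M$, there exist $b_1,b_2\in M$ with $a_i\le b_i$ ($i=1,2$) and $b=b_1b_2$. *)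

From Stdlib Require Import List.

(* The bottom 0 is [sup (fun _ => False)]; meets exist by completeness. *)
Record MultLattice := {
  carrier :> Type;
  le : carrier -> carrier -> Prop;
  sup : (carrier -> Prop) -> carrier;
  mul : carrier -> carrier -> carrier;
  one : carrier;
  le_refl : forall x, le x x;
  le_trans : forall x y z, le x y -> le y z -> le x z;
  le_antisym : forall x y, le x y -> le y x -> x = y;
  sup_ub : forall (S : carrier -> Prop) x, S x -> le x (sup S);
  sup_least : forall (S : carrier -> Prop) y,
      (forall x, S x -> le x y) -> le (sup S) y;
  mul_comm : forall x y, mul x y = mul y x;
  mul_assoc : forall x y z, mul x (mul y z) = mul (mul x y) z;
  mul_one : forall x, mul one x = x;
  le_one : forall x, le x one;
  mul_sup : forall a (S : carrier -> Prop),
      mul a (sup S) = sup (fun y => exists b, S b /\ y = mul a b)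
}.

Arguments le {_} _ _.
Arguments sup {_} _.
Arguments mul {_} _ _.
Arguments one {_}.

Section Defs.
Variable L : MultLattice.

Definition compact (c : L) : Prop :=
  forall S : L -> Prop, le c (sup S) ->
    exists T : list L, (forall x, In x T -> S x) /\ le c (sup (fun x => In x T)).

Definition C_lattice : Prop :=
  compact one /\
  (forall a b, compact a -> compact b -> compact (mul a b)) /\
  (forall x : L, x = sup (fun c => compact c /\ le c x)).

Definition prime_el (p : L) : Prop :=
  p <> one /\ forall x y : L, le (mul x y) p -> le x p \/ le y p.

Definition loc (p x : L) : L :=
  sup (fun a => compact a /\
        exists s, compact s /\ le (mul a s) x /\ ~ le s p).

Definition in_loc (p y : L) : Prop := exists x, y = loc p x.

Definition sharp_on (M : L -> Prop) (m : L -> L -> L) : Prop :=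
  forall a1 a2 b, M a1 -> M a2 -> M b -> le (m a1 a2) b ->
    exists b1 b2, M b1 /\ M b2 /\ le a1 b1 /\ le a2 b2 /\ b = m b1 b2.

Definition sharp : Prop := sharp_on (fun _ => True) mul.

Definition loc_sharp (p : L) : Prop :=
  sharp_on (in_loc p) (fun x y => loc p (mul x y)).

End Defs.

(* Localization at p is a closure operator x |-> x_p which absorbs localized
   factors: (x_p y_p)_p = (xy)_p.  Given a1 a2 <= b in L_p we have a1 a2 <= b
   in L, so sharpness of L writes b = c1 c2 with a_i <= c_i; then
   b = b_p = (c1 c2)_p = ((c1)_p (c2)_p)_p, and b_i := (c_i)_p works. *)
From Stdlib Require Import List.

Section MultLatticeFacts.
Variable L : MultLattice.

Lemma mul_mono_r (a x y : L) : le x y -> le (mul a x) (mul a y).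
Proof.
  intro Hxy.
  assert (Ey : y = sup (fun z => z = x \/ z = y)).
  { apply le_antisym.
    - apply sup_ub; auto.
    - apply sup_least. intros z [-> | ->]; auto using le_refl. }
  rewrite Ey, mul_sup. apply sup_ub. exists x; auto.
Qed.

Lemma mul_mono_l (a x y : L) : le x y -> le (mul x a) (mul y a).
Proof. intro Hxy. rewrite (mul_comm _ x a), (mul_comm _ y a). now apply mul_mono_r. Qed.

Lemma mul_mono (a b x y : L) : le a x -> le b y -> le (mul a b) (mul x y).
Proof.
  intros Hax Hby. apply le_trans with (mul x b); [apply mul_mono_l | apply mul_mono_r]; auto.
Qed.

Lemma mul_le_l (a b : L) : le (mul a b) a.
Proof.
  apply le_trans with (mul a one); [apply mul_mono_r, le_one |].
  rewrite mul_comm, mul_one. apply le_refl.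
Qed.

Lemma mul_le_r (a b : L) : le (mul a b) b.
Proof. rewrite mul_comm. apply mul_le_l. Qed.

Lemma mul_mulACA (a b c d : L) : mul (mul a b) (mul c d) = mul (mul a c) (mul b d).
Proof.
  rewrite <- !mul_assoc. f_equal. rewrite !mul_assoc. f_equal. apply mul_comm.
Qed.

Lemma prime_one_not_le (p : L) : prime_el L p -> ~ le one p.
Proof. intros [Hp1 _] H1p. apply Hp1, le_antisym; auto using le_one. Qed.

Lemma prime_mul_not_le (p s t : L) :
  prime_el L p -> ~ le s p -> ~ le t p -> ~ le (mul s t) p.
Proof. intros [_ Hp] Hs Ht Hst. destruct (Hp _ _ Hst); auto. Qed.

Lemma C_lattice_le_compact (y z : L) : C_lattice L ->
  (forall c, compact L c -> le c y -> le c z) -> le y z.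
Proof.
  intros (_ & _ & Hjoin) Hyz. rewrite (Hjoin y). apply sup_least.
  intros c [Hc Hcy]. auto.
Qed.

End MultLatticeFacts.

Section Localization.
Variables (L : MultLattice) (p : L).
Hypotheses (HC : C_lattice L) (Hp : prime_el L p).

Definition loc_below (x a : L) : Prop :=
  exists s, compact L s /\ le (mul a s) x /\ ~ le s p.

Lemma loc_below_le_loc (x a : L) : compact L a -> loc_below x a -> le a (loc L p x).
Proof. intros Ha Hax. apply sup_ub. now split. Qed.

Lemma loc_below_le (x a : L) : le a x -> loc_below x a.
Proof.
  intro Hax. destruct HC as (Hone & _).
  exists one. rewrite mul_comm, mul_one. auto using prime_one_not_le.
Qed.

Lemma loc_below_trans (x a s : L) :
  compact L s -> ~ le s p -> loc_below x (mul a s) -> loc_below x a.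
Proof.
  intros Hs Hsp (t & Ht & Hast & Htp). destruct HC as (_ & Hmul & _).
  exists (mul s t). rewrite mul_assoc. auto using prime_mul_not_le.
Qed.

(* The witnesses of the members of a finite family multiply to a common one. *)
Lemma loc_below_sup_list (x : L) (T : list L) :
  (forall t, In t T -> loc_below x t) -> loc_below x (sup (fun y => In y T)).
Proof.
  destruct HC as (_ & Hmul & _).
  induction T as [|t T IH]; intro HT.
  - apply loc_below_le. apply sup_least. intros y [].
  - destruct IH as (s & Hs & HTs & Hsp); [intros u Hu; apply HT; now right |].
    destruct (HT t (or_introl eq_refl)) as (st & Hst & Htst & Hstp).
    exists (mul s st). repeat split; auto using prime_mul_not_le.
    rewrite mul_comm, mul_sup. apply sup_least. intros z (y & [<- | Hy] & ->).
    + apply le_trans with (mul t st); [| exact Htst].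
      rewrite (mul_comm _ _ t). apply mul_mono_r, mul_le_r.
    + apply le_trans with (mul (sup (fun y => In y T)) s); [| exact HTs].
      rewrite (mul_comm _ _ y). apply mul_mono; [apply sup_ub; auto | apply mul_le_l].
Qed.

Lemma compact_le_loc (x a : L) : compact L a -> le a (loc L p x) -> loc_below x a.
Proof.
  intros Ha Hax. destruct (Ha _ Hax) as (T & HT & HaT).
  destruct (loc_below_sup_list x T) as (s & Hs & HTs & Hsp).
  { intros t Ht. apply HT, Ht. }
  exists s. repeat split; auto. apply le_trans with (mul (sup (fun y => In y T)) s); auto.
  now apply mul_mono_l.
Qed.

Lemma loc_mono (x y : L) : le x y -> le (loc L p x) (loc L p y).
Proof.
  intro Hxy. apply sup_least. intros a (Ha & s & Hs & Hasx & Hsp).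
  apply loc_below_le_loc; auto. exists s. eauto using le_trans.
Qed.

Lemma le_loc (x : L) : le x (loc L p x).
Proof.
  apply C_lattice_le_compact; auto. intros c Hc Hcx.
  apply loc_below_le_loc, loc_below_le; auto.
Qed.

Lemma loc_le_loc (x y : L) : le y (loc L p x) -> le (loc L p y) (loc L p x).
Proof.
  intro Hyx. destruct HC as (_ & Hmul & _).
  apply sup_least. intros a (Ha & s & Hs & Hasy & Hsp).
  apply loc_below_le_loc; auto. apply loc_below_trans with s; auto.
  apply compact_le_loc; eauto using le_trans.
Qed.

Lemma loc_idem (x : L) : loc L p (loc L p x) = loc L p x.
Proof. apply le_antisym; [apply loc_le_loc, le_refl | apply le_loc]. Qed.

Lemma mul_loc_le (x y : L) : le (mul (loc L p x) (loc L p y)) (loc L p (mul x y)).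
Proof.
  destruct HC as (_ & Hmul & _).
  unfold loc at 2. rewrite mul_sup. apply sup_least.
  intros z (d & (Hd & t & Ht & Hdt & Htp) & ->).
  rewrite mul_comm. unfold loc at 1. rewrite mul_sup. apply sup_least.
  intros z (c & (Hc & u & Hu & Hcu & Hup) & ->).
  apply loc_below_le_loc; auto. exists (mul t u). repeat split; auto using prime_mul_not_le.
  rewrite mul_mulACA, (mul_comm _ x y). now apply mul_mono.
Qed.

Lemma loc_mul_loc (x y : L) : loc L p (mul (loc L p x) (loc L p y)) = loc L p (mul x y).
Proof.
  apply le_antisym.
  - apply loc_le_loc, mul_loc_le.
  - apply loc_mono, mul_mono; apply le_loc.
Qed.

End Localization.

Theorem lemma2p6 (L : MultLattice) (p : L) :
  C_lattice L -> sharp L -> prime_el L p -> loc_sharp L p.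
Proof.
  intros HC Hsharp Hp a1 a2 b _ _ [z Hb] Ha12b.
  assert (Ha12b' : le (mul a1 a2) b).
  { apply le_trans with (loc L p (mul a1 a2)); auto using le_loc. }
  destruct (Hsharp a1 a2 b I I I Ha12b') as (c1 & c2 & _ & _ & Hac1 & Hac2 & Hb12).
  exists (loc L p c1), (loc L p c2). repeat split.
  - now exists c1.
  - now exists c2.
  - apply le_trans with c1; auto using le_loc.
  - apply le_trans with c2; auto using le_loc.
  - rewrite loc_mul_loc, <- Hb12, Hb by auto. symmetry. now apply loc_idem.
Qed.
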